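(* Let $\xi_0,\dots,\xi_{m-1}\in\mathbb{Q}_p$. If $\sum_{j=0}^{m-1}\chi(\xi_j)=0$, then $p$ divides $m$ and $\sum_{j=0}^{m-1}\chi(x\xi_j)=0$ for every $x\in\mathbb{Z}_p^\times$.
   Context: $p\ge2$ is a prime and $\mathbb{Z}_p^\times=\{x\in\mathbb{Q}_p:|x|_p=1\}$ is the group of units of $\mathbb{Z}_p$. Characters: $\chi(x)=e^{2\pi i\{x\}}$, where $\{x\}=\sum_{n=v_p(x)}^{-1}a_np^n$ is the fractional part of $x=\sum_{n\ge v_p(x)}a_np^n$ with digits $a_n\in\{0,\dots,p-1\}$. *)

From Stdlib Require Import Reals Lia Arith ZArith Znumtheory.
Open Scope R_scope.

(* Z_p as the inverse limit of Z/p^n Z: a compatible family of residues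
   s n in [0, p^n) with s (n+1) = s n (mod p^n). *)
Record Zp (p : nat) := mkZp {
  zp_seq : nat -> nat;
  zp_lt : forall n, (zp_seq n < p ^ n)%nat;
  zp_compat : forall n, Nat.modulo (zp_seq (S n)) (p ^ n) = zp_seq n
}.
Arguments zp_seq {p} _ _.

Lemma zp_pow_nz p (x : Zp p) n : (p ^ n <> 0)%nat.
Proof. pose proof (zp_lt p x n); lia. Qed.

Lemma zp_mul_lt p (x y : Zp p) n :
  (Nat.modulo (zp_seq x n * zp_seq y n) (p ^ n) < p ^ n)%nat.
Proof. apply Nat.mod_upper_bound, (zp_pow_nz p x). Qed.

Lemma zp_mul_compat p (x y : Zp p) n :
  Nat.modulo (Nat.modulo (zp_seq x (S n) * zp_seq y (S n)) (p ^ S n)) (p ^ n)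
  = Nat.modulo (zp_seq x n * zp_seq y n) (p ^ n).
Proof.
  pose proof (zp_pow_nz p x n) as H0.
  replace (p ^ S n)%nat with (p ^ n * p)%nat by (simpl; lia).
  rewrite Nat.Div0.mod_mul_r.
  rewrite (Nat.mul_comm (p ^ n)%nat (_ mod p)%nat), Nat.Div0.mod_add, Nat.Div0.mod_mod.
  rewrite Nat.Div0.mul_mod, (zp_compat p x n), (zp_compat p y n).
  reflexivity.
Qed.

Definition Zp_mul {p} (x y : Zp p) : Zp p :=
  mkZp p (fun n => Nat.modulo (zp_seq x n * zp_seq y n) (p ^ n))
       (zp_mul_lt p x y) (zp_mul_compat p x y).

(* x is a unit of Z_p, i.e. |x|_p = 1, i.e. x is not divisible by p. *)
Definition Zp_unit {p} (x : Zp p) : Prop := zp_seq x 1 <> 0%nat.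

(* Q_p: every element is p^{-k} z with k : nat and z : Z_p;
   the pair (k, z) stands for p^{-k} z. *)
Definition Qp (p : nat) : Type := (nat * Zp p)%type.

Definition Qp_scale {p} (x : Zp p) (xi : Qp p) : Qp p :=
  (fst xi, Zp_mul x (snd xi)).

(* p-adic fractional part {xi}: for xi = p^{-k} z, {xi} = (z mod p^k)/p^k. *)
Definition frac_p {p} (xi : Qp p) : R :=
  INR (zp_seq (snd xi) (fst xi)) / INR (p ^ fst xi).

(* chi(xi) = e^{2 pi i {xi}}, given by its real and imaginary parts. *)
Definition chi_re {p} (xi : Qp p) : R := cos (2 * PI * frac_p xi).
Definition chi_im {p} (xi : Qp p) : R := sin (2 * PI * frac_p xi).

Fixpoint rsum (f : nat -> R) (m : nat) : R :=
  match m with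
  | O => 0
  | S m' => rsum f m' + f m'
  end.

(* Choose N larger than every denominator exponent. Then chi(xi_j) = zeta ^ a_j
   for a primitive p^N-th root of unity zeta, so sum_j chi(xi_j) = 0 says that
   zeta is a root of Q(X) = sum_j X^a_j. Its minimal polynomial over Q is the
   cyclotomic polynomial Phi(X) = sum_(i < p) X^(i p^(N-1)), which is monic with
   integer coefficients; hence Q = Phi * R with R in Z[X], and evaluating at 1
   gives m = p R(1). Multiplying by a unit x replaces zeta by zeta ^ u with u
   prime to p, another root of Phi and therefore of Q. *)

From Stdlib Require Import Reals Lra ZArith Znumtheory.
From mathcomp Require Import all_boot all_order all_algebra all_field zify.
From mathcomp Require Import Rstruct complex.
(* Imported after mathcomp so that [Zp] is the type of Defs, not mathcomp's. *)
From Pilot Require Import Defs.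
Import GRing.Theory Num.Theory.
Set Implicit Arguments. Unset Strict Implicit. Unset Printing Implicit Defensive.

Section PrimePowerCyclotomic.
Local Open Scope ring_scope.
Variables (p k : nat).
Hypothesis p_prime : prime p.
Local Notation n := (p ^ k.+1)%N.

Let expp_gt0 e : (0 < p ^ e)%N.
Proof. by rewrite expn_gt0 prime_gt0. Qed.

Definition cyclotomic_ppow (R : nzRingType) : {poly R} := \sum_(i < p) 'X^(p ^ k * i).

Lemma map_cyclotomic_ppow (R S : nzRingType) (f : {rmorphism R -> S}) :
  map_poly f (cyclotomic_ppow R) = cyclotomic_ppow S.
Proof. by rewrite rmorph_sum; apply: eq_bigr => i _; rewrite rmorphXn /= map_polyX. Qed.

Lemma horner_cyclotomic_ppow (R : nzRingType) (x : R) :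
  (cyclotomic_ppow R).[x] = \sum_(i < p) (x ^+ (p ^ k)) ^+ i.
Proof. by rewrite horner_sum; apply: eq_bigr => i _; rewrite hornerXn exprM. Qed.

Lemma cyclotomic_ppowE (R : nzRingType) :
  ('X^(p ^ k) - 1) * cyclotomic_ppow R = 'X^n - 1.
Proof.
rewrite /cyclotomic_ppow (eq_bigr (fun i : 'I_p => 'X^(p ^ k) ^+ i)) => [|i _].
  by rewrite -subrX1 -exprM expnSr.
by rewrite exprM.
Qed.

Lemma cyclotomic_ppow_monic (R : nzRingType) : cyclotomic_ppow R \is monic.
Proof.
have := monicXnsubC (R := R) 1 (expp_gt0 k.+1).
by rewrite polyC1 -cyclotomic_ppowE monicMl // -polyC1 monicXnsubC.
Qed.

Lemma size_cyclotomic_ppow (R : nzRingType) :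
  size (cyclotomic_ppow R) = (totient n).+1.
Proof.
have := congr1 (fun q : {poly R} => size q) (cyclotomic_ppowE R).
rewrite -polyC1 !size_XnsubC //.
rewrite size_Mmonic ?monicXnsubC ?cyclotomic_ppow_monic //; last first.
  by rewrite -size_poly_eq0 size_XnsubC.
rewrite size_XnsubC // totient_pfactor //= expnSr.
have p_gt0 := prime_gt0 p_prime; have := expp_gt0 k.
case: (size _) => [|s] /=; nia.
Qed.

Lemma root_cyclotomic_ppow (R : idomainType) (x : R) : p%:R != 0 :> R ->
  root (cyclotomic_ppow R) x = n.-primitive_root x.
Proof.
move=> p_neq0; have := congr1 (horner^~ x) (cyclotomic_ppowE R).
rewrite hornerM !hornerE => Ex.
apply/idP/idP => [/rootP Phi_x0 | x_prim].
  have x_n : x ^+ n = 1 by apply/eqP; rewrite -subr_eq0 -Ex Phi_x0 mulr0.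
  have x_pk : x ^+ (p ^ k) != 1.
    apply: contraNneq p_neq0 => x_pk; rewrite -Phi_x0 horner_cyclotomic_ppow x_pk.
    by rewrite (eq_bigr (fun=> 1)) => [|i _]; rewrite ?expr1n // sumr_const card_ord.
  have [d d_prim /(dvdn_pfactor _ _ p_prime)[j j_le d_eq]] :=
    prim_order_exists (expp_gt0 _) x_n.
  move: j_le d_prim; rewrite {}d_eq leq_eqVlt ltnS => /predU1P[-> //|j_le_k].
  move=> pj_prim; case/negP: x_pk.
  by rewrite -(prim_order_dvd pj_prim) dvdn_exp2l.
have x_pk : x ^+ (p ^ k) != 1.
  by rewrite -(prim_order_dvd x_prim) dvdn_Pexp2l ?prime_gt1 // ltnn.
apply/rootP/(mulfI (_ : x ^+ (p ^ k) - 1 != 0)); first by rewrite subr_eq0.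
by rewrite mulr0 Ex (prim_expr_order x_prim) subrr.
Qed.

Lemma cyclotomic_ppow_dvdp (F : numFieldType) (z : F) (q : {poly rat}) :
  n.-primitive_root z -> root (map_poly ratr q) z -> cyclotomic_ppow rat %| q.
Proof.
move=> z_prim qz; have p_neq0 (R : numFieldType) : p%:R != 0 :> R.
  by rewrite pnatr_eq0 -lt0n prime_gt0.
(* Irreducibility over Q is imported from algC: a complex root w of the gcd is
   a primitive root of unity, whose minimal polynomial has the size of Phi. *)
set g := gcdp (cyclotomic_ppow rat) q.
have gz : root (map_poly (ratr : rat -> F) g) z.
  by rewrite gcdp_map root_gcd map_cyclotomic_ppow root_cyclotomic_ppow ?p_neq0 ?z_prim.
have [w gw] : exists w : algC, root (map_poly ratr g) w.
  apply/closed_rootP; rewrite size_map_poly neq_ltn orbC.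
  rewrite -(size_map_poly (ratr : {rmorphism rat -> F})) (root_size_gt1 _ gz) //.
  by rewrite map_poly_eq0 gcdp_eq0 negb_and monic_neq0 ?cyclotomic_ppow_monic.
have w_prim : n.-primitive_root w.
  rewrite -root_cyclotomic_ppow ?p_neq0 // -(map_cyclotomic_ppow ratr).
  by apply: root_dvdp gw; rewrite dvdp_map dvdp_gcdl.
have [pw [Dpw _] pwP] := minCpolyP w.
have pw_g : pw %| g by rewrite -pwP.
have : pw %= cyclotomic_ppow rat.
  rewrite -dvdp_size_eqp ?(dvdp_trans pw_g) ?dvdp_gcdl // size_cyclotomic_ppow.
  rewrite -(size_map_poly (ratr : {rmorphism rat -> algC})) -Dpw.
  by rewrite (minCpoly_cyclotomic w_prim) size_cyclotomic.
by move/eqp_dvdl => <-; apply: dvdp_trans pw_g (dvdp_gcdr _ _).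
Qed.

Lemma cyclotomic_ppow_dvdp_int (F : numFieldType) (z : F) (q : {poly int}) :
  n.-primitive_root z -> root (map_poly intr q) z ->
  exists r, q = cyclotomic_ppow int * r.
Proof.
move=> z_prim qz.
have : cyclotomic_ppow int %| q.
  rewrite -dvdp_rat_int map_cyclotomic_ppow (cyclotomic_ppow_dvdp z_prim) //.
  by rewrite -map_poly_comp (eq_map_poly (rmorph_int _)).
case/dvdpP_int=> r ->; exists r.
by rewrite zprimitive_monic ?cyclotomic_ppow_monic.
Qed.

End PrimePowerCyclotomic.

Section VanishingSumsOfRootsOfUnity.
Local Open Scope ring_scope.
Context {p k : nat} {F : numFieldType} {z : F} {a : nat -> nat} {m : nat}.
Hypotheses (p_prime : prime p) (z_prim : (p ^ k.+1).-primitive_root z).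
Hypothesis sum_z_eq0 : \sum_(j < m) z ^+ a j = 0.

Let exp_poly (R : nzRingType) : {poly R} := \sum_(j < m) 'X^(a j).

Let map_exp_poly (R : nzRingType) (f : {rmorphism int -> R}) :
  map_poly f (exp_poly int) = exp_poly R.
Proof. by rewrite rmorph_sum; apply: eq_bigr => j _; rewrite rmorphXn /= map_polyX. Qed.

Let horner_exp_poly (R : nzRingType) (x : R) :
  (exp_poly R).[x] = \sum_(j < m) x ^+ a j.
Proof. by rewrite horner_sum; apply: eq_bigr => j _; rewrite hornerXn. Qed.

Let exp_polyE : exists r, exp_poly int = cyclotomic_ppow p k int * r.
Proof.
apply: (cyclotomic_ppow_dvdp_int p_prime z_prim).
by rewrite map_exp_poly /root horner_exp_poly sum_z_eq0.
Qed.

Lemma dvdn_sum_prim_root_eq0 : (p %| m)%N.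
Proof.
have [r /(congr1 (horner^~ 1))] := exp_polyE.
rewrite hornerM horner_exp_poly horner_cyclotomic_ppow.
under [in LHS]eq_bigr do rewrite expr1n.
under [in RHS]eq_bigr do rewrite !expr1n.
rewrite !sumr_const !card_ord => /(congr1 absz).
by rewrite abszM !natz /= => ->; rewrite dvdn_mulr.
Qed.

Lemma sum_prim_root_eq0 (w : F) :
  (p ^ k.+1).-primitive_root w -> \sum_(j < m) w ^+ a j = 0.
Proof.
move=> w_prim; have [r Er] := exp_polyE.
rewrite -horner_exp_poly -(map_exp_poly intr) Er rmorphM /= map_cyclotomic_ppow.
rewrite hornerM (rootP _) ?mul0r // root_cyclotomic_ppow //.
by rewrite pnatr_eq0 -lt0n prime_gt0.
Qed.

End VanishingSumsOfRootsOfUnity.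

Lemma modnE a b : Nat.modulo a b = a %% b.
Proof.
case: b => [|b] //; symmetry; apply: (Nat.mod_unique _ _ (a %/ b.+1)).
  by apply/ltP; rewrite ltn_pmod.
by rewrite {1}(divn_eq a b.+1); lia.
Qed.

Lemma expnE a b : Nat.pow a b = expn a b.
Proof. by elim: b => [|b IH] //=; rewrite expnS IH multE. Qed.

Lemma prime_of_Zprime p : Znumtheory.prime (Z.of_nat p) -> prime p.
Proof.
move=> p_prime; apply/primeP; split; first by have := prime_ge_2 _ p_prime; lia.
move=> d /dvdnP[c p_eq].
have /(prime_divisors _ p_prime) : (Z.of_nat d | Z.of_nat p)%Z.
  by exists (Z.of_nat c); rewrite p_eq; lia.
by case=> [|[|[|]]]; lia.
Qed.

Local Open Scope R_scope.

Definition expi (t : R) : R[i] := Complex (cos t) (sin t).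

Lemma expi_natmul t a : (expi t ^+ a)%R = expi (INR a * t).
Proof.
elim: a => [|a IH]; first by rewrite expr0 Rmult_0_l /expi cos_0 sin_0.
rewrite exprS IH S_INR Rmult_plus_distr_r Rmult_1_l Rplus_comm /expi cos_plus sin_plus.
by congr Complex; rewrite /= Rplus_comm.
Qed.

Lemma cos_lt1 x : 0 < x < 2 * PI -> cos x < 1.
Proof.
move=> x_bounds; have -> : x = 2 * (x / 2) by field.
rewrite cos_2a_sin; have : 0 < sin (x / 2) by apply: sin_gt_0; lra.
nra.
Qed.

Lemma prim_root_expi n : (0 < n)%N -> (n.-primitive_root (expi (2 * PI / INR n)))%R.
Proof.
move=> n_gt0; have n_pos : 0 < INR n by apply: lt_0_INR; lia.
apply/andP; split=> //; apply/forallP => i; rewrite unity_rootE expi_natmul.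
have [-> | i_neq] := eqVneq i.+1 n.
  have -> : INR n * (2 * PI / INR n) = 2 * PI by field; lra.
  suff -> : expi (2 * PI) = 1%R by rewrite !eqxx.
  by rewrite /expi cos_2PI sin_2PI.
rewrite eqbF_neg; apply/eqP => -[cos_eq1 _]; move: cos_eq1; apply/Rlt_not_eq/cos_lt1.
have i_lt : INR i.+1 < INR n by apply: lt_INR; have := ltn_ord i; lia.
have i_pos : 0 < INR i.+1 by apply: lt_0_INR; lia.
have th_pos : 0 < 2 * PI / INR n by apply: Rdiv_lt_0_compat; have := PI_RGT_0; lra.
split; first exact: Rmult_lt_0_compat.
apply: (Rlt_le_trans _ (INR n * (2 * PI / INR n))); first exact: Rmult_lt_compat_r.
by right; field; lra.
Qed.

Lemma rsum_complex (f g : nat -> R) m :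
  Complex (rsum f m) (rsum g m) = (\sum_(j < m) Complex (f j) (g j))%R.
Proof. by elim: m => [|m IH]; rewrite ?big_ord0 // big_ord_recr -IH. Qed.

Section PadicCharacter.
Variable p : nat.
Hypothesis p_gt0 : (0 < p)%N.

Lemma zp_seq_mod (x : Zp p) k N :
  (k <= N)%N -> (zp_seq x N %% p ^ k)%N = zp_seq x k.
Proof.
move=> /subnKC <-; elim: (N - k)%N => [|d IH].
  by rewrite addn0 modn_small // -expnE; apply/ltP/zp_lt.
rewrite addnS -IH -(zp_compat _ x (k + d)) modnE expnE.
by rewrite modn_dvdm // dvdn_exp2l // leq_addr.
Qed.

(* For xi.1 <= N, the fractional part {xi} equals qp_num N xi / p ^ N. *)
Definition qp_num N (xi : Qp p) : nat := (zp_seq xi.2 xi.1 * p ^ (N - xi.1))%N.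

Lemma qp_num_scale N (x : Zp p) (xi : Qp p) : (xi.1 <= N)%N ->
  qp_num N (Qp_scale x xi) = (zp_seq x N * qp_num N xi %% p ^ N)%N.
Proof.
move=> le_N; rewrite /qp_num /= modnE expnE multE.
have -> : (p ^ N = p ^ xi.1 * p ^ (N - xi.1))%N by rewrite -expnD subnKC.
by rewrite mulnA -muln_modl -[in RHS]modnMml zp_seq_mod.
Qed.

Lemma chi_expi N (xi : Qp p) : (xi.1 <= N)%N ->
  Complex (chi_re xi) (chi_im xi) = (expi (2 * PI / INR (p ^ N)) ^+ qp_num N xi)%R.
Proof.
move=> le_N; rewrite expi_natmul /chi_re /chi_im /frac_p /qp_num expnE.
have pN : (p ^ N = p ^ xi.1 * p ^ (N - xi.1))%N by rewrite -expnD subnKC.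
have INR_expn_neq0 e : INR (p ^ e) <> 0.
  by apply/not_0_INR/eqP; rewrite -lt0n expn_gt0 p_gt0.
suff -> : 2 * PI * (INR (zp_seq xi.2 xi.1) / INR (p ^ xi.1)) =
  INR (zp_seq xi.2 xi.1 * p ^ (N - xi.1)) * (2 * PI / INR (p ^ N)) by [].
rewrite pN !mult_INR; field; split; exact: INR_expn_neq0.
Qed.

Lemma zp_unit_coprime (x : Zp p) N :
  prime p -> Zp_unit x -> coprime (zp_seq x N.+1) p.
Proof.
move=> p_prime x_unit; rewrite coprime_sym prime_coprime // /dvdn.
by rewrite -[p in _ %% p]expn1 zp_seq_mod //; apply/eqP.
Qed.

Lemma chi_sum_expi N (xi : nat -> Qp p) m :
  (forall j, (j < m)%N -> ((xi j).1 <= N)%N) ->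
  Complex (rsum (fun j => chi_re (xi j)) m) (rsum (fun j => chi_im (xi j)) m) =
  (\sum_(j < m) expi (2 * PI / INR (p ^ N)) ^+ qp_num N (xi j))%R.
Proof.
move=> xi_le; rewrite rsum_complex; apply: eq_bigr => j _.
exact: chi_expi (xi_le _ (ltn_ord j)).
Qed.

End PadicCharacter.

(* The [prime] of the statement is that of Znumtheory. *)
Import Znumtheory.
Local Open Scope R_scope.

Theorem lemma2p6 (p : nat) (Hp : prime (Z.of_nat p)) (m : nat)
  (xi : nat -> Qp p) :
  rsum (fun j => chi_re (xi j)) m = 0 /\ rsum (fun j => chi_im (xi j)) m = 0 ->
  Nat.divide p m /\
  (forall x : Zp p, Zp_unit x ->
     rsum (fun j => chi_re (Qp_scale x (xi j))) m = 0 /\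
     rsum (fun j => chi_im (Qp_scale x (xi j))) m = 0).
Proof.
move=> [sum_re sum_im]; have p_prime := prime_of_Zprime Hp.
have p_gt0 := prime_gt0 p_prime.
pose N := (\max_(j < m) (xi j).1).+1.
have xi_le j : (j < m)%N -> ((xi j).1 <= N)%N.
  by move=> lt_jm; apply/leqW/(leq_bigmax (Ordinal lt_jm)).
pose zeta := expi (2 * PI / INR (p ^ N)).
have zeta_prim : ((p ^ N)%N.-primitive_root zeta)%R.
  by apply: prim_root_expi; rewrite expn_gt0 p_gt0.
pose a j := qp_num N (xi j).
have sum_eq0 : (\sum_(j < m) zeta ^+ a j = 0)%R.
  by rewrite -chi_sum_expi // sum_re sum_im.
split.
  have /dvdnP[c ->] := dvdn_sum_prim_root_eq0 p_prime zeta_prim sum_eq0.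
  by exists c; rewrite multE.
move=> x x_unit; pose u := zp_seq x N.
have zeta_u_prim : ((p ^ N)%N.-primitive_root (zeta ^+ u))%R.
  by rewrite prim_root_exp_coprime // coprime_pexpr // zp_unit_coprime.
suff : Complex (rsum (fun j => chi_re (Qp_scale x (xi j))) m)
               (rsum (fun j => chi_im (Qp_scale x (xi j))) m) = 0%R by case.
rewrite (chi_sum_expi p_gt0 (N := N)) //.
rewrite -[RHS](sum_prim_root_eq0 p_prime zeta_prim sum_eq0 zeta_u_prim).
by apply: eq_bigr => j _; rewrite qp_num_scale ?xi_le // (prim_expr_mod zeta_prim) exprM.
Qed.
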